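(* Let $\mathbf n=(n_1,\dots,n_r)$ and $\mathbf d=(d_1,\dots,d_r)$ be $r$-tuples of positive integers with $n_1\leq\dots\leq n_r$, and let $SV^{\mathbf n}_{\mathbf d}\subseteq\mathbb P^{N(\mathbf n,\mathbf d)}$, $N(\mathbf n,\mathbf d)=\prod_{i=1}^r\binom{n_i+d_i}{n_i}-1$, be the Segre–Veronese variety, i.e. the image of $\mathbb P^{n_1}\times\dots\times\mathbb P^{n_r}$ under the embedding given by $\mathcal O(d_1,\dots,d_r)$. If $h$ is a positive integer with $h\leq\lceil d_i/2\rceil$ for all $i=1,\dots,r$, then the Terracini locus $T_h(SV^{\mathbf n}_{\mathbf d})$ is empty.
   Context: For a smooth irreducible non-degenerate $X\subseteq\mathbb P^N$ of dimension $n$, the $h$-th Terracini locus $T_h(X)$ is the closure in $X^h/S_h$ of the set of unordered $h$-tuples of pairwise distinct points $x_1,\dots,x_h\in X$ with $\dim\langle T_{x_1}X,\dots,T_{x_h}X\rangle<\min\{hn+h-1,N\}$. *)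

(* Ground field: the complex numbers, realised as R[i]
   (mathcomp-real-closed [complex]) for an arbitrary realType R. *)
From HB Require Import structures.
From mathcomp Require Import all_boot all_order all_algebra.
From mathcomp Require Import reals.
From mathcomp.real_closed Require Export complex.
Set Implicit Arguments. Unset Strict Implicit. Unset Printing Implicit Defensive.
Import GRing.Theory.
Local Open Scope ring_scope.

(* Monomials of degree k in the m+1 homogeneous coordinates of P^m:
   exponent vectors e : (m+1).-tuple 'I_(k+1) with sum k.               *)
Definition Mon (m k : nat) :=
  {t : (m.+1).-tuple 'I_k.+1 | \sum_(j < m.+1) (val (tnth t j)) == k}%N.

(* Coordinates of P^{N(n,d)}: multihomogeneous monomials of multidegree d
   in r groups of n_1+1, ..., n_r+1 variables.                           *)
Definition SVidx (r : nat) (n d : 'I_r -> nat) : finType :=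
  {dffun forall i : 'I_r, Mon (n i) (d i)}.

Section SV.
Variables (F : fieldType) (r : nat) (n d : 'I_r -> nat).

Definition SVpt := forall i : 'I_r, 'I_(n i).+1 -> F.

Definition expo (a : SVidx n d) (i : 'I_r) (j : 'I_(n i).+1) : nat :=
  val (tnth (val (a i)) j).
Arguments expo a i j : clear implicits.

Definition sv (v : SVpt) : {ffun SVidx n d -> F^o} :=
  [ffun a => \prod_(i < r) \prod_(j < (n i).+1) v i j ^+ expo a i j].

(* Partial derivative of the Segre–Veronese map w.r.t. the variable
   x_{i0,j0}, evaluated at v: coordinatewise, derivative at t = 0 of
   t |-> phi_a(v + t e_{i0 j0}). *)
Definition dsv (v : SVpt) (i0 : 'I_r) (j0 : nat) : {ffun SVidx n d -> F^o} :=
  [ffun a => ((\prod_(i < r) \prod_(j < (n i).+1)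
      ((v i j)%:P + (if (i == i0) && (val j == j0) then 'X else 0)) ^+ expo a i j)
        ^`()).[0]].

(* Affine cone over the embedded tangent space T_x X at x = [sv v]:
   the span of sv v and all partial derivatives of sv at v. *)
Definition tangent_cone (v : SVpt) : {vspace {ffun SVidx n d -> F^o}} :=
  <<sv v :: [seq dsv v i (val j) | i <- enum 'I_r, j <- enum 'I_(n i).+1]>>%VS.

(* v represents a point of P^{n_1} x ... x P^{n_r}: each block is nonzero. *)
Definition nonzero_pt (v : SVpt) : Prop := forall i : 'I_r, exists j, v i j != 0.

(* Two points of SV (given by affine representatives) coincide in P^N. *)
Definition same_proj_pt (v w : SVpt) : Prop := exists c : F, sv v = c *: sv w.

End SV.

From HB Require Import structures.
From mathcomp Require Import all_boot all_order all_algebra.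
From mathcomp Require Import reals.
From mathcomp.real_closed Require Import complex.
From mathcomp Require Import ring zify.
Import GRing.Theory.
Local Open Scope ring_scope.

(* The tangent cones at x_1, ..., x_h span a space of dimension at least
   h (n_1 + ... + n_r + 1), which is exhibited by as many forms of multidegree d,
   viewed as linear functionals on the ambient space, that are dual to
   vectors of the span.  For a point x_k take linear forms L_l, l <> k, each on
   a single factor, vanishing at x_l but not at x_k; these exist because
   distinct points of the Segre-Veronese variety differ in some factor.  The
   product of the L_l^2 vanishes to second order at every x_l, l <> k, and uses
   at most 2(h-1) < d_i degrees in the i-th factor, so powers of coordinates
   not vanishing at x_k complete it to a form of multidegree d that is nonzero
   at x_k.  Multiplying instead by a linear form vanishing at x_k gives forms
   whose derivatives at x_k pick out each of the n_1 + ... + n_r tangent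
   directions. *)

Lemma sum_delta_mul (R : pzSemiRingType) (I : finType) (j : I) (y : I -> R) :
  \sum_l (l == j)%:R * y l = y j.
Proof. by under eq_bigr do rewrite mulr_natl mulrb; rewrite -big_mkcond big_pred1_eq. Qed.

Definition expvec {r} (n : 'I_r -> nat) := forall i : 'I_r, 'I_(n i).+1 -> nat.

(* Forms are evaluated at points with polynomial coordinates: along [line v i j],
   the line through [v] in the direction of the coordinate (i, j), the value at
   t = 0 is the value at [v] and the derivative at t = 0 the partial derivative. *)
Definition polypt (F : fieldType) {r} (n : 'I_r -> nat) :=
  forall i : 'I_r, 'I_(n i).+1 -> {poly F}.

Section MultihomogeneousForms.
Context {F : fieldType} {r : nat} {n : 'I_r -> nat}.

Definition monomial (e : expvec n) (V : polypt F n) : {poly F} :=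
  \prod_(i < r) \prod_(j < (n i).+1) V i j ^+ e i j.

(* Repeated monomials are allowed, which makes products of forms immediate. *)
Definition homog_form (deg : 'I_r -> nat) (f : polypt F n -> {poly F}) : Prop :=
  exists (J : finType) (c : J -> F) (e : J -> expvec n),
    (forall a i, \sum_(j < (n i).+1) e a i j = deg i)%N /\
    forall V, f V = \sum_(a : J) c a *: monomial (e a) V.

Lemma homog_form_ext {deg deg' f f'} :
    (forall i, deg i = deg' i) -> (forall V, f V = f' V) ->
  homog_form deg f -> homog_form deg' f'.
Proof.
move=> Edeg Ef [J [c [e [He Ef']]]]; exists J, c, e; split.
  by move=> a i; rewrite He Edeg.
by move=> V; rewrite -Ef Ef'.
Qed.

Lemma homog_form1 : homog_form (fun=> 0%N) (fun=> 1).
Proof.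
exists unit, (fun=> 1), (fun _ _ _ => 0%N); split=> [_ i|V]; first by rewrite big1.
rewrite (big_pred1 tt) // scale1r /monomial big1 // => i _; exact: big1.
Qed.

Lemma monomialD e e' V :
  monomial (fun i j => e i j + e' i j)%N V = monomial e V * monomial e' V.
Proof.
rewrite /monomial -big_split; apply: eq_bigr => i _.
by rewrite -big_split; apply: eq_bigr => j _; rewrite exprD.
Qed.

Lemma homog_formM {deg1 deg2 f1 f2} : homog_form deg1 f1 -> homog_form deg2 f2 ->
  homog_form (fun i => deg1 i + deg2 i)%N (fun V => f1 V * f2 V).
Proof.
move=> [J1 [c1 [e1 [He1 Ef1]]]] [J2 [c2 [e2 [He2 Ef2]]]].
exists (J1 * J2)%type, (fun a => c1 a.1 * c2 a.2),
  (fun a i j => e1 a.1 i j + e2 a.2 i j)%N; split=> [[a1 a2] i|V].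
  by rewrite big_split /= He1 He2.
rewrite Ef1 Ef2 mulr_suml -(pair_bigA _ (fun a1 a2 =>
  (c1 a1 * c2 a2) *: monomial (fun i j => e1 a1 i j + e2 a2 i j)%N V)) /=.
apply: eq_bigr => a1 _.
rewrite mulr_sumr; apply: eq_bigr => a2 _.
by rewrite monomialD -scalerAl -scalerAr scalerA.
Qed.

Lemma homog_form_prod {J : Type} (s : seq J) (P : pred J)
    {deg : J -> 'I_r -> nat} {f : J -> polypt F n -> {poly F}} :
    (forall a, homog_form (deg a) (f a)) ->
  homog_form (fun i => \sum_(a <- s | P a) deg a i)%N
             (fun V => \prod_(a <- s | P a) f a V).
Proof.
move=> homf; elim: s => [|a s IHs].
  by apply: homog_form_ext homog_form1 => [i|V]; rewrite big_nil.
have [Pa|nPa] := boolP (P a).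
  by apply: homog_form_ext (homog_formM (homf a) IHs) => [i|V]; rewrite big_cons Pa.
by apply: homog_form_ext IHs => [i|V]; rewrite big_cons (negbTE nPa).
Qed.

Lemma homog_formX {deg f} m : homog_form deg f ->
  homog_form (fun i => m * deg i)%N (fun V => f V ^+ m).
Proof.
move=> homf; elim: m => [|m IHm].
  by apply: homog_form_ext homog_form1 => [i|V]; rewrite ?mul0n ?expr0.
by apply: homog_form_ext (homog_formM homf IHm) => [i|V]; rewrite ?mulSn ?exprS.
Qed.

Definition linform (i : 'I_r) (w : 'I_(n i).+1 -> F) (V : polypt F n) : {poly F} :=
  \sum_(j < (n i).+1) w j *: V i j.

Definition linform_at (i : 'I_r) (w : 'I_(n i).+1 -> F) (v : SVpt F n) : F :=
  \sum_(j < (n i).+1) w j * v i j.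

Lemma homog_form_linform i w : homog_form (fun i' => (i' == i) : nat) (linform i w).
Proof.
exists 'I_(n i).+1, w, (fun j i' j' => ((i' == i) && (val j' == val j)) : nat).
split=> [j i'|V].
  have [->|ne] := eqVneq i' i; last by rewrite big1.
  rewrite (bigD1 j) //= eqxx big1 // => j' /negbTE; by rewrite -(inj_eq val_inj) => ->.
apply: eq_bigr => j _; congr (_ *: _).
rewrite /monomial (bigD1 i) //= [X in _ * X]big1 ?mulr1 => [|i' /negbTE ne]; last first.
  by rewrite big1 // => j' _; rewrite ne.
rewrite (bigD1 j) //= !eqxx expr1 big1 ?mulr1 // => j' /negbTE.
by rewrite -(inj_eq val_inj) => ->.
Qed.

Lemma homog_form_coord i j : homog_form (fun i' => (i' == i) : nat) (fun V => V i j).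
Proof.
apply: homog_form_ext (homog_form_linform i (fun l => (l == j)%:R)) => // V.
rewrite /linform (bigD1 j) //= eqxx scale1r big1 ?addr0 // => l /negbTE ->.
exact: scale0r.
Qed.

Lemma linform_at_delta2 i (j j' : 'I_(n i).+1) t v :
  linform_at i (fun l => (l == j)%:R - (l == j')%:R * t) v = v i j - t * v i j'.
Proof.
rewrite /linform_at (eq_bigr (fun l => (l == j)%:R * v i l - t * ((l == j')%:R * v i l))).
  by rewrite sumrB -mulr_sumr !sum_delta_mul.
by move=> l _; rewrite mulrBl mulrCA mulrA.
Qed.

Definition line (v : SVpt F n) (i0 : 'I_r) (j0 : nat) : polypt F n :=
  fun i j => (v i j)%:P + (if (i == i0) && (val j == j0) then 'X else 0).

Lemma horner_line v i0 j0 i j : (line v i0 j0 i j).[0] = v i j.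
Proof. by rewrite hornerD hornerC; case: ifP; rewrite ?hornerX ?horner0 addr0. Qed.

Lemma horner_linform_line i w v i0 j0 : (linform i w (line v i0 j0)).[0] = linform_at i w v.
Proof. by rewrite horner_sum; apply: eq_bigr => j _; rewrite hornerZ horner_line. Qed.

Lemma deriv_line v i0 j0 i j :
  (line v i0 j0 i j)^`() = ((i == i0) && (val j == j0))%:R%:P.
Proof. by rewrite /line derivD derivC add0r; case: ifP; rewrite ?derivX ?deriv0. Qed.

Lemma deriv_linform_line i w v i0 j0 :
  ((linform i w (line v i0 j0))^`()).[0] =
    \sum_(j < (n i).+1) w j * ((i == i0) && (val j == j0))%:R.
Proof.
rewrite /linform raddf_sum horner_sum; apply: eq_bigr => j _ /=.
by rewrite derivZ deriv_line hornerZ hornerC.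
Qed.

Lemma deriv_linform_line_eq i w v (j : 'I_(n i).+1) :
  ((linform i w (line v i j))^`()).[0] = w j.
Proof.
rewrite deriv_linform_line (bigD1 j) //= ?eqxx mulr1 big1 ?addr0 // => j' nj'.
by move: nj'; rewrite -val_eqE => /negbTE ->; rewrite mulr0.
Qed.

Lemma deriv_linform_line_neq i w v i0 j0 : i != i0 ->
  ((linform i w (line v i0 j0))^`()).[0] = 0.
Proof.
by move=> /negbTE ne; rewrite deriv_linform_line big1 // => j _; rewrite ne mulr0.
Qed.

End MultihomogeneousForms.

Lemma exists_Mon {m k} (y : 'I_m.+1 -> nat) : (\sum_j y j)%N = k ->
  exists a : Mon m k, forall j, val (tnth (val a) j) = y j.
Proof.
move=> sum_y.
have y_lt j : (y j < k.+1)%N by rewrite ltnS -sum_y (bigD1 j) //= leq_addr.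
pose t := [tuple (inord (y j) : 'I_k.+1) | j < m.+1].
have tE j : val (tnth t j) = y j by rewrite tnth_mktuple /= inordK.
have t_sum : (\sum_(j < m.+1) val (tnth t j) == k)%N.
  by apply/eqP; rewrite -[RHS]sum_y; apply: eq_bigr => j _; rewrite tE.
by exists (exist _ t t_sum).
Qed.

Section SegreVeroneseCoordinates.
Context {F : fieldType} {r : nat} {n d : 'I_r -> nat}.

Definition expvec_of (a : SVidx n d) : expvec n := fun i j => expo a j.

Definition SVcoefs (c : SVidx n d -> F) (f : polypt F n -> {poly F}) : Prop :=
  forall V, f V = \sum_a c a *: monomial (expvec_of a) V.

Lemma homog_form_SVcoefs {f : polypt F n -> {poly F}} :
  homog_form d f -> exists c, SVcoefs c f.
Proof.
move=> [J [c [e [sum_e Ef]]]].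
have /fin_all_exists [idx Eidx] : forall a, exists b : SVidx n d,
    forall i j, expvec_of b i j = e a i j.
  move=> a; have /fin_all_exists [t Et] : forall i, exists t : Mon (n i) (d i),
      forall j, val (tnth (val t) j) = e a i j.
    by move=> i; apply: exists_Mon; exact: sum_e.
  by exists (finfun t) => i j; rewrite /expvec_of /expo ffunE Et.
exists (fun b => \sum_(a | idx a == b) c a) => V.
rewrite Ef (partition_big idx xpredT) //=; apply: eq_bigr => b _.
rewrite scaler_suml; apply: eq_bigr => a /eqP <-; congr (_ *: _).
by apply: eq_bigr => i _; apply: eq_bigr => j _; rewrite Eidx.
Qed.

Definition pairing (c : SVidx n d -> F) (w : {ffun SVidx n d -> F^o}) : F :=
  \sum_a c a * w a.

Lemma pairing_is_linear c : linear (pairing c : _ -> F^o).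
Proof.
move=> k u w; rewrite /pairing /GRing.scale /= mulr_sumr -big_split /=.
by apply: eq_bigr => a _; rewrite !ffunE /GRing.scale /= mulrDr mulrCA.
Qed.

Lemma pairingB c u w : pairing c (u - w) = pairing c u - pairing c w.
Proof. by rewrite /pairing -sumrB; apply: eq_bigr => a _; rewrite !ffunE mulrBr. Qed.

Lemma pairingZ c k w : pairing c (k *: w) = k * pairing c w.
Proof.
rewrite /pairing mulr_sumr; apply: eq_bigr => a _.
by rewrite ffunE /GRing.scale /= mulrCA.
Qed.

Section PairingForm.
Context {c : SVidx n d -> F} {f : polypt F n -> {poly F}}.
Hypothesis cf : SVcoefs c f.

Lemma pairing_sv v i0 j0 : pairing c (sv d v) = (f (line v i0 j0)).[0].
Proof.
rewrite cf horner_sum; apply: eq_bigr => a _.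
rewrite hornerZ ffunE horner_prod; congr (_ * _); apply: eq_bigr => i _.
by rewrite horner_prod; apply: eq_bigr => j _; rewrite horner_exp horner_line.
Qed.

Lemma pairing_dsv v i0 j0 :
  pairing c (dsv d v i0 j0) = ((f (line v i0 j0))^`()).[0].
Proof.
by rewrite cf raddf_sum horner_sum; apply: eq_bigr => a _; rewrite ffunE /= derivZ hornerZ.
Qed.

End PairingForm.

End SegreVeroneseCoordinates.

Lemma card_le_dimv_dual {K : fieldType} {vT : vectType K} {I : finType}
    (phi : I -> vT -> K) (U : {vspace vT}) :
    (forall a, linear (phi a : vT -> K^o)) ->
    (forall a, exists2 u, u \in U & forall b, (phi b u != 0) = (b == a)) ->
  (#|I| <= \dim U)%N.
Proof.
move=> phi_lin dual.
pose f (u : vT) : {ffun I -> K^o} := [ffun b => phi b u].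
have f_lin : linear f by move=> k u w; apply/ffunP => b; rewrite !ffunE phi_lin.
pose fL : {linear vT -> {ffun I -> K^o}} :=
  HB.pack f (GRing.isLinear.Build _ _ _ _ f f_lin).
have delta_img a : [ffun b => ((b == a)%:R : K^o)] \in (linfun fL @: U)%VS.
  have [u Uu phi_u] := dual a.
  suff -> : [ffun b => ((b == a)%:R : K^o)] = (phi a u)^-1 *: linfun fL u.
    by rewrite memvZ ?memv_img.
  apply/ffunP => b; rewrite !ffunE lfunE /= ffunE.
  have [->|nba] := eqVneq b a; first by rewrite [_ *: _]mulVf // phi_u eqxx.
  by move: (phi_u b); rewrite (negbTE nba) => /negbFE/eqP ->; rewrite [_ *: _]mulr0.
have -> : #|I| = \dim (fullv : {vspace {ffun I -> K^o}}) by rewrite dimvf /dim /= muln1.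
apply: leq_trans (dimvS _) (_ : \dim (linfun fL @: U) <= \dim U)%N.
  apply/subvP => y _.
  have -> : y = \sum_a y a *: [ffun b => ((b == a)%:R : K^o)].
    apply/ffunP => b; rewrite sum_ffunE (bigD1 b) //= big1 => [|a /negbTE nab].
      by rewrite !ffunE eqxx addr0 [_ *: _]mulr1.
    by rewrite !ffunE eq_sym nab [_ *: _]mulr0.
  by apply: rpred_sum => a _; rewrite rpredZ.
by rewrite -(limg_ker_dim (linfun fL) U) leq_addl.
Qed.

Section DoubleRoot.
Context {F : fieldType}.

Definition double_root0 (P : {poly F}) := P.[0] = 0 /\ (P^`()).[0] = 0.

Lemma horner_derivM0 (P Q : {poly F}) :
  ((P * Q)^`()).[0] = (P^`()).[0] * Q.[0] + P.[0] * (Q^`()).[0].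
Proof. by rewrite derivM hornerD !hornerM. Qed.

Lemma double_root0_sqr (P : {poly F}) : P.[0] = 0 -> double_root0 (P ^+ 2).
Proof.
move=> P0; rewrite expr2.
by split; rewrite ?horner_derivM0 ?hornerM P0 ?mulr0 ?mul0r ?addr0.
Qed.

Lemma double_root0Mr (P Q : {poly F}) : double_root0 P -> double_root0 (P * Q).
Proof.
by move=> [P0 dP0]; split; rewrite ?horner_derivM0 ?hornerM P0 ?dP0 ?mul0r ?addr0.
Qed.

Lemma double_root0Ml (P Q : {poly F}) : double_root0 P -> double_root0 (Q * P).
Proof. by rewrite mulrC; apply: double_root0Mr. Qed.

End DoubleRoot.

Section DualForms.
Context {F : fieldType} {r : nat} {n d : 'I_r -> nat} {h : nat}.
Context {x : 'I_h -> SVpt F n} {rho : 'I_h -> forall i, 'I_(n i).+1}.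
Hypothesis x_rho_neq0 : forall k i, x k i (rho k i) != 0.
Context {sig : 'I_h -> 'I_h -> 'I_r} {tau : forall k l, 'I_(n (sig k l)).+1 -> F}.
Hypothesis tau_other : forall k l, k != l -> linform_at (sig k l) (tau k l) (x l) = 0.
Hypothesis tau_self : forall k l, k != l -> linform_at (sig k l) (tau k l) (x k) != 0.
Hypothesis h_le_uphalf : forall i, (h <= uphalf (d i))%N.

Definition sepsq k (V : polypt F n) : {poly F} :=
  \prod_(l | l != k) linform (sig k l) (tau k l) V ^+ 2.

Definition sepsq_deg k i := (\sum_(l | l != k) 2 * (i == sig k l))%N.

Definition pivot k (e : 'I_r -> nat) (V : polypt F n) : {poly F} :=
  \prod_i V i (rho k i) ^+ e i.

Definition codeg k i := (d i - sepsq_deg k i)%N.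

Definition point_form k V := sepsq k V * pivot k (codeg k) V.

Definition tangent_cofactor k i V :=
  sepsq k V * pivot k (fun i' => codeg k i' - (i' == i))%N V.

Definition vanishing_lin k i (j : 'I_(n i).+1) : 'I_(n i).+1 -> F :=
  fun l => (l == j)%:R - (l == rho k i)%:R * (x k i j / x k i (rho k i)).

Definition tangent_dir k (q : {i : 'I_r & 'I_(n i)}) : 'I_(n (tag q)).+1 :=
  lift (rho k (tag q)) (tagged q).

Definition tangent_form k (q : {i : 'I_r & 'I_(n i)}) V :=
  linform (tag q) (vanishing_lin k (tag q) (tangent_dir k q)) V *
  tangent_cofactor k (tag q) V.

Lemma sepsq_deg_lt k i : (sepsq_deg k i < d i)%N.
Proof.
have le_sum : (sepsq_deg k i <= \sum_(l | l != k) 2)%N.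
  by apply: leq_sum => l _; case: (i == sig k l).
have sum2 : (\sum_(l | l != k) 2 = h.-1 * 2)%N by rewrite sum_nat_const cardC1 card_ord.
by have := h_le_uphalf i; rewrite geq_uphalf_double; have := ltn_ord k; lia.
Qed.

Lemma homog_form_sepsq k : homog_form (sepsq_deg k) (sepsq k).
Proof.
exact: (homog_form_prod (index_enum _) (fun l => l != k)
  (fun l => homog_formX 2 (homog_form_linform _ (tau k l)))).
Qed.

Lemma homog_form_pivot k e : homog_form e (pivot k e).
Proof.
apply: homog_form_ext (homog_form_prod (index_enum _) xpredT
  (fun i => homog_formX (e i) (homog_form_coord i (rho k i)))) => // i.
rewrite (bigD1 i) //= eqxx muln1 big1 ?addn0 // => i' ni'.
by rewrite eq_sym (negbTE ni') muln0.
Qed.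

Lemma homog_form_point_form k : homog_form d (point_form k).
Proof.
apply: homog_form_ext (homog_formM (homog_form_sepsq k) (homog_form_pivot k _)) => // i.
by have := sepsq_deg_lt k i; rewrite /codeg; lia.
Qed.

Lemma homog_form_tangent_form k q : homog_form d (tangent_form k q).
Proof.
apply: homog_form_ext (homog_formM (homog_form_linform _ _)
  (homog_formM (homog_form_sepsq k) (homog_form_pivot k _))) => // i.
by have := sepsq_deg_lt k i; rewrite /codeg; case: (i == tag q); lia.
Qed.

Lemma sepsq_other k k' i0 j0 : k' != k -> double_root0 (sepsq k' (line (x k) i0 j0)).
Proof.
move=> nk; rewrite /sepsq (bigD1 k) 1?eq_sym //=.
by apply/double_root0Mr/double_root0_sqr; rewrite horner_linform_line tau_other.
Qed.

Lemma point_form_other k k' i0 j0 : k' != k ->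
  double_root0 (point_form k' (line (x k) i0 j0)).
Proof. by move=> nk; apply/double_root0Mr/sepsq_other. Qed.

Lemma tangent_form_other k k' q i0 j0 : k' != k ->
  double_root0 (tangent_form k' q (line (x k) i0 j0)).
Proof. by move=> nk; apply/double_root0Ml/double_root0Mr/sepsq_other. Qed.

Lemma sepsq_self_neq0 k i0 j0 : (sepsq k (line (x k) i0 j0)).[0] != 0.
Proof.
rewrite horner_prod; apply/prodf_neq0 => l nlk.
by rewrite horner_exp horner_linform_line expf_neq0 // tau_self // eq_sym.
Qed.

Lemma pivot_self_neq0 k e i0 j0 : (pivot k e (line (x k) i0 j0)).[0] != 0.
Proof.
rewrite horner_prod; apply/prodf_neq0 => i _.
by rewrite horner_exp horner_line expf_neq0.
Qed.

Lemma point_form_self_neq0 k i0 j0 : (point_form k (line (x k) i0 j0)).[0] != 0.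
Proof. by rewrite hornerM mulf_neq0 ?sepsq_self_neq0 ?pivot_self_neq0. Qed.

Lemma tangent_cofactor_self_neq0 k i i0 j0 :
  (tangent_cofactor k i (line (x k) i0 j0)).[0] != 0.
Proof. by rewrite hornerM mulf_neq0 ?sepsq_self_neq0 ?pivot_self_neq0. Qed.

Lemma linform_at_vanishing_lin k i j : linform_at i (vanishing_lin k i j) (x k) = 0.
Proof. by rewrite linform_at_delta2 divfK ?subrr. Qed.

Lemma tangent_form_self k q i0 j0 : (tangent_form k q (line (x k) i0 j0)).[0] = 0.
Proof. by rewrite hornerM horner_linform_line linform_at_vanishing_lin mul0r. Qed.

Lemma deriv_tangent_form_self k p q :
  ((tangent_form k p (line (x k) (tag q) (tangent_dir k q)))^`()).[0] =
    (p == q)%:R * (tangent_cofactor k (tag p) (line (x k) (tag q) (tangent_dir k q))).[0].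
Proof.
rewrite horner_derivM0 horner_linform_line linform_at_vanishing_lin mul0r addr0.
congr (_ * _); case: p q => [i j] [i' j'].
have [ii'|ni] := eqVneq i i'; last first.
  rewrite deriv_linform_line_neq //; case: eqP => // -[ii' _].
  by rewrite ii' eqxx in ni.
subst i'; rewrite deriv_linform_line_eq eq_Tagged /vanishing_lin /tangent_dir /=.
rewrite (inj_eq (@lift_inj _ _)) eq_sym [_ == rho k i]eq_sym.
by rewrite (negbTE (neq_lift _ _)) mul0r subr0.
Qed.

Definition dual_index := ('I_h * option {i : 'I_r & 'I_(n i)})%type.

Definition dual_form (a : dual_index) : polypt F n -> {poly F} :=
  if a.2 is Some q then tangent_form a.1 q else point_form a.1.

Lemma homog_form_dual_form a : homog_form d (dual_form a).
Proof.
by case: a => k [q|]; [apply: homog_form_tangent_form | apply: homog_form_point_form].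
Qed.

(* The multiple of [sv (x k)] removed from the derivative is the one seen by
   the functional of the point [x k]. *)
Definition tangent_vec (c : dual_index -> SVidx n d -> F) k q :
  {ffun SVidx n d -> F^o} :=
  let w := dsv d (x k) (tag q) (tangent_dir k q) in
  w - (pairing (c (k, None)) w / pairing (c (k, None)) (sv d (x k))) *: sv d (x k).

Section Pairing.
Context {c : dual_index -> SVidx n d -> F}.
Variable i0 : 'I_r.
Hypothesis c_dual : forall a, SVcoefs (c a) (dual_form a).

Lemma pairing_sv_neq0 k b : (pairing (c b) (sv d (x k)) != 0) = (b == (k, None)).
Proof.
rewrite (pairing_sv (c_dual b) _ i0 0); case: b => k' [q|] /=.
  have [->|nk] := eqVneq k' k; first by rewrite tangent_form_self eqxx xpair_eqE andbF.
  by rewrite (tangent_form_other _ _ _ _ _ nk).1 eqxx xpair_eqE (negbTE nk).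
have [->|nk] := eqVneq k' k; first by rewrite point_form_self_neq0 !eqxx.
by rewrite (point_form_other _ _ _ _ nk).1 eqxx xpair_eqE (negbTE nk).
Qed.

Lemma pairing_sv_eq0 k b : b != (k, None) -> pairing (c b) (sv d (x k)) = 0.
Proof. by move=> nb; apply/eqP; rewrite -[_ == 0]negbK pairing_sv_neq0 nb. Qed.

Lemma pairing_dsv_other k b i j : b.1 != k -> pairing (c b) (dsv d (x k) i j) = 0.
Proof.
rewrite (pairing_dsv (c_dual b)); case: b => k' [q|] /= nk.
  exact: (tangent_form_other _ _ _ _ _ nk).2.
exact: (point_form_other _ _ _ _ nk).2.
Qed.

Lemma pairing_dsv_tangent k p q :
  (pairing (c (k, Some p)) (dsv d (x k) (tag q) (tangent_dir k q)) != 0) = (p == q).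
Proof.
rewrite (pairing_dsv (c_dual _)) /= deriv_tangent_form_self.
have [->|_] := eqVneq p q; last by rewrite mul0r eqxx.
by rewrite mul1r tangent_cofactor_self_neq0.
Qed.

Lemma pairing_tangent_vec k q b :
  (pairing (c b) (tangent_vec c k q) != 0) = (b == (k, Some q)).
Proof.
rewrite pairingB pairingZ; case: b => k' o.
have [->|nk] := eqVneq k' k; last first.
  rewrite pairing_dsv_other // (pairing_sv_eq0 k (k', o)) ?xpair_eqE ?(negbTE nk) //.
  by rewrite mulr0 subr0 eqxx.
case: o => [p|]; last first.
  by rewrite divfK ?pairing_sv_neq0 // subrr eqxx xpair_eqE /= andbF.
rewrite (pairing_sv_eq0 k (k, Some p)) ?xpair_eqE ?andbF // mulr0 subr0.
by rewrite pairing_dsv_tangent eqxx.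
Qed.

End Pairing.

Lemma dimv_ge_tangent_span (i0 : 'I_r) (U : {vspace {ffun SVidx n d -> F^o}}) :
    (forall k, sv d (x k) \in U) ->
    (forall k i (j : 'I_(n i).+1), dsv d (x k) i j \in U) ->
  (h * (\sum_i n i).+1 <= \dim U)%N.
Proof.
move=> U_sv U_dsv.
have /fin_all_exists [c c_dual] := fun a => homog_form_SVcoefs (homog_form_dual_form a).
have -> : (h * (\sum_i n i).+1 = #|{: dual_index}|)%N.
  rewrite card_prod card_ord card_option card_tagged sumnE big_map big_enum /=.
  by under [in RHS]eq_bigr do rewrite card_ord.
apply: (card_le_dimv_dual (fun a => pairing (c a))) => [a|[k [q|]]].
- exact: pairing_is_linear.
- exists (tangent_vec c k q); last exact: pairing_tangent_vec.
  by rewrite memvB ?memvZ ?U_sv ?U_dsv.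
- by exists (sv d (x k)); last exact: pairing_sv_neq0.
Qed.

End DualForms.

Lemma nonzero_pt_pivot {F : fieldType} {r : nat} {n : 'I_r -> nat} {v : SVpt F n} :
  nonzero_pt v -> exists p : forall i, 'I_(n i).+1, forall i, v i (p i) != 0.
Proof. exact: (@fin_all_exists _ (fun i => 'I_(n i).+1) (fun i j => v i j != 0)). Qed.

Lemma separating_linform {F : fieldType} {r : nat} {n d : 'I_r -> nat} {v w : SVpt F n} :
    nonzero_pt w -> ~ same_proj_pt d v w ->
  exists i (f : 'I_(n i).+1 -> F), linform_at i f w = 0 /\ linform_at i f v != 0.
Proof.
move=> /nonzero_pt_pivot [pw w_pw_neq0] not_proj.
pose c i := v i (pw i) / w i (pw i).
have [/forallP propvw | ] := boolP [forall i, [forall j, v i j == c i * w i j]]; last first.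
  rewrite negb_forall; case/existsP => i; rewrite negb_forall; case/existsP => j vij.
  exists i, (fun l => (l == j)%:R - (l == pw i)%:R * (w i j / w i (pw i))).
  rewrite !linform_at_delta2 divfK ?subrr //; split=> //.
  rewrite subr_eq0; apply: contra vij => /eqP ->; apply/eqP; rewrite /c; ring.
case: not_proj; exists (\prod_i c i ^+ d i); apply/ffunP => a.
rewrite !ffunE /GRing.scale /= -big_split /=; apply: eq_bigr => i _.
under eq_bigr do rewrite (eqP (forallP (propvw i) _)) exprMn.
by rewrite big_split /= prodrXr (eqP (valP (a i))).
Qed.

Lemma separating_linforms {F : fieldType} {r : nat} {n d : 'I_r -> nat} {h : nat}
    {x : 'I_h -> SVpt F n} (i0 : 'I_r) :
    (forall k, nonzero_pt (x k)) -> (forall k l, k != l -> ~ same_proj_pt d (x k) (x l)) ->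
  exists (sig : 'I_h -> 'I_h -> 'I_r) (tau : forall k l, 'I_(n (sig k l)).+1 -> F),
    forall k l, k != l ->
      linform_at (sig k l) (tau k l) (x l) = 0 /\ linform_at (sig k l) (tau k l) (x k) != 0.
Proof.
move=> x_neq0 x_distinct.
have /fin_all_exists [sep sepP] : forall p : 'I_h * 'I_h,
    exists s : {i : 'I_r & 'I_(n i).+1 -> F}, p.1 != p.2 ->
      linform_at (tag s) (tagged s) (x p.2) = 0 /\
      linform_at (tag s) (tagged s) (x p.1) != 0.
  move=> [k l]; have [<-|nkl] := eqVneq k l.
    by exists (Tagged (fun i => 'I_(n i).+1 -> F) (fun _ : 'I_(n i0).+1 => 0)).
  have [i [f fP]] := separating_linform (x_neq0 l) (x_distinct k l nkl).
  by exists (Tagged (fun i => 'I_(n i).+1 -> F) f).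
exists (fun k l => tag (sep (k, l))), (fun k l => tagged (sep (k, l))) => k l.
exact: (sepP (k, l)).
Qed.

Lemma dimv_sum_tangent_cone_ge {F : fieldType} {r : nat} {n d : 'I_r -> nat} {h : nat}
    {x : 'I_h -> SVpt F n} :
    (0 < r)%N -> (forall i, h <= uphalf (d i))%N ->
    (forall k, nonzero_pt (x k)) ->
    (forall k l, k != l -> ~ same_proj_pt d (x k) (x l)) ->
  (h * (\sum_(i < r) n i).+1 <= \dim (\sum_(k < h) tangent_cone d (x k)))%N.
Proof.
move=> r_gt0 h_le x_neq0 x_distinct; pose i0 := Ordinal r_gt0.
have /fin_all_exists [rho x_rho_neq0] := fun k => nonzero_pt_pivot (x_neq0 k).
have [sig [tau tauP]] := separating_linforms i0 x_neq0 x_distinct.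
apply: (dimv_ge_tangent_span x_rho_neq0 (fun k l kl => (tauP k l kl).1)
  (fun k l kl => (tauP k l kl).2) h_le i0) => [k|k i j];
  apply: subvP (sumv_sup k _ _) _ _ => //; apply: memv_span.
  exact: mem_head.
by rewrite in_cons; apply/orP; right; apply/allpairsPdep; exists i, j; rewrite !mem_enum.
Qed.

Theorem corollary4p3 (R : realType) (r : nat) (n d : 'I_r -> nat) (h : nat) :
  (0 < r)%N ->
  (forall i, 0 < n i)%N ->
  (forall i, 0 < d i)%N ->
  (forall i j : 'I_r, (i <= j)%N -> (n i <= n j)%N) ->
  (0 < h)%N ->
  (forall i, h <= uphalf (d i))%N ->
  forall x : 'I_h -> SVpt R[i] n,
    (forall k, nonzero_pt (x k)) ->
    (forall k l, k != l -> ~ same_proj_pt d (x k) (x l)) ->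
    (minn (h * (\sum_(i < r) n i) + h - 1)
          ((\prod_(i < r) 'C(n i + d i, n i)) - 1)
       <= (\dim (\sum_(k < h) tangent_cone d (x k))%VS).-1)%N.
Proof.
move=> r_gt0 _ _ _ _ h_le x x_neq0 x_distinct.
have := dimv_sum_tangent_cone_ge r_gt0 h_le x_neq0 x_distinct.
by rewrite mulnS => dim_ge; apply: leq_trans (geq_minl _ _) _; lia.
Qed.
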